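(* Let $G$ be a graph with maximum degree $\Delta\ge 3$. Then $$\pi_l(G) \le \left\lceil \Delta^2 + \frac{3}{2^{2/3}}\Delta^{5/3} + \frac{2^{2/3}\Delta^{5/3}}{\Delta^{1/3}-2^{1/3}}\right\rceil.$$
   Context: In a vertex-colored graph, a $2j$-repetition is a path $v_1v_2\dots v_{2j}$ on $2j$ vertices with $c(v_i)=c(v_{i+j})$ for all $1\le i\le j$. A vertex-coloring is non-repetitive if it contains no $2j$-repetition for any $j\ge1$. $\pi_l(G)$, the non-repetitive choice number, is the minimum $k$ such that for every assignment of lists of size at least $k$ to the vertices, $G$ has a non-repetitive coloring in which every vertex receives a color from its list. *)

From Stdlib Require Import Reals.
From mathcomp Require Import all_boot.

Set Implicit Arguments.
Unset Strict Implicit.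
Unset Printing Implicit Defensive.

(* A finite simple graph: vertex type T : finType, adjacency e : rel T,
   assumed symmetric and irreflexive (hypotheses in the theorem). *)

Definition deg (T : finType) (e : rel T) (v : T) : nat := #|[set u | e v u]|.
Definition maxdeg (T : finType) (e : rel T) : nat := \max_(v : T) deg e v.

Definition is_graph_path (T : finType) (e : rel T) (p : seq T) : bool :=
  uniq p && sorted e p.

Definition is_repetition (T : finType) (e : rel T) (c : T -> nat) (p : seq T) : Prop :=
  exists j : nat, [/\ 0 < j, size p = j.*2, is_graph_path e p &
                     map c (take j p) = map c (drop j p)].

Definition nonrepetitive (T : finType) (e : rel T) (c : T -> nat) : Prop :=
  forall p : seq T, ~ is_repetition e c p.

(* G is non-repetitively k-choosable: for every assignment of lists of size at
   least k (colours are natural numbers), there is a non-repetitive colouring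
   choosing each vertex colour from its list. pi_l(G) <= k iff this holds. *)
Definition nonrep_choosable (T : finType) (e : rel T) (k : nat) : Prop :=
  forall L : T -> seq nat, (forall v, k <= size (undup (L v))) ->
    exists c : T -> nat, (forall v, c v \in L v) /\ nonrepetitive e c.

Definition rep_bound (D : R) : R :=
  Rplus (Rplus (Rsqr D)
               (Rmult (Rdiv 3 (Rpower 2 (Rdiv 2 3))) (Rpower D (Rdiv 5 3))))
        (Rdiv (Rmult (Rpower 2 (Rdiv 2 3)) (Rpower D (Rdiv 5 3)))
              (Rminus (Rpower D (Rdiv 1 3)) (Rpower 2 (Rdiv 1 3)))).

Definition ceil_nat (x : R) : nat := Z.to_nat (Z.opp (Z.sub (up (Ropp x)) 1%Z)).

(* A counting argument in the style of Rosenfeld. For a vertex set S let C(S) be the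
   number of list colourings of S that are non-repetitive on S. Extending a good
   colouring of S to a new vertex v gives at least k C(S) colourings; a bad one contains
   a repetition of some length 2j through v, and is determined by that repetition
   (at most j D^(2j-1) choices) together with its restriction to the vertices outside
   the first half, a good colouring of a set with j - 1 fewer vertices of S. If
   C(S + u) >= b C(S) holds for smaller sets, there are at most C(S) / b^(j-1) such
   restrictions, so C(S + v) >= (k - D sum_j j (D^2/b)^(j-1)) C(S) >= b C(S) as soon as
   k >= b + D / (1 - D^2/b)^2. Hence C(V) > 0, and b = D^2 + 2^(1/3) D^(5/3) makes
   this condition the stated bound. *)

From Stdlib Require Import Reals Lra Lia ZArith.
From mathcomp Require Import ssreflect ssrfun ssrbool.

Section RealBound.
Local Open Scope R_scope.

Lemma Rpower_third_pow (x : R) (n : nat) :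
  0 < x -> Rpower x (INR n / 3) = Rpower x (1 / 3) ^ n.
Proof.
move=> x0; rewrite -Rpower_pow; last exact: exp_pos.
by rewrite Rpower_mult; congr Rpower; field.
Qed.

Lemma Rpower_third_cube (x : R) : 0 < x -> Rpower x (1 / 3) ^ 3 = x.
Proof.
move=> x0; rewrite -Rpower_third_pow //.
by replace (INR 3 / 3) with 1 by (simpl; field); rewrite Rpower_1.
Qed.

(* The witness is [b = D^2 + 2^(1/3) D^(5/3)]. With [y = D^(1/3)] and
   [c = 2^(1/3)] one has [b = y^5 (y + c)], so [D / (1 - D^2 / b)^2 =
   y^3 (y + c)^2 / c^2], and [c^3 = 2] makes the gap to [rep_bound D] equal to
   [(y^4 + c y^3) / (y - c)]. *)
Lemma rep_bound_ge (D : R) : 3 <= D ->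
  exists2 b, D ^ 2 < b & b + D / (1 - D ^ 2 / b) ^ 2 <= rep_bound D.
Proof.
move=> hD; set c := Rpower 2 (1 / 3); set y := Rpower D (1 / 3).
have c0 : 0 < c by apply: exp_pos.
have y0 : 0 < y by apply: exp_pos.
have c3 : c ^ 3 = 2 by apply: Rpower_third_cube; lra.
have y3 : y ^ 3 = D by apply: Rpower_third_cube; lra.
have cy : c < y.
  case: (Rlt_le_dec c y) => // yc.
  have : y ^ 3 <= c ^ 3 by apply: pow_incr; lra.
  lra.
have D53 : Rpower D (5 / 3) = y ^ 5.
  by rewrite -Rpower_third_pow; [congr Rpower; simpl; field | lra].
have c23 : Rpower 2 (2 / 3) = c ^ 2.
  by rewrite -Rpower_third_pow; [congr Rpower; simpl; field | lra].
have y5 : 0 < y ^ 5 by apply: pow_lt.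
have cy5 := Rmult_lt_0_compat _ _ c0 y5.
exists (D ^ 2 + c * y ^ 5); first lra.
have gap : rep_bound D - (D ^ 2 + c * y ^ 5 + D / (1 - D ^ 2 / (D ^ 2 + c * y ^ 5)) ^ 2)
         = (y ^ 4 + c * y ^ 3) / (y - c) + (c ^ 3 - 2) * y ^ 5 / (c * (y - c)).
  rewrite /rep_bound D53 c23 -/y -/c /Rsqr -y3.
  replace 3 with (c ^ 3 + 1) at 1 by lra.
  field; repeat split; try lra; nra.
rewrite c3 Rminus_diag Rmult_0_l /Rdiv Rmult_0_l Rplus_0_r in gap.
have : 0 <= (y ^ 4 + c * y ^ 3) / (y - c).
  apply: Rle_mult_inv_pos; last lra.
  have : 0 < y ^ 4 by apply: pow_lt.
  have : 0 < y ^ 3 by apply: pow_lt.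
  nra.
lra.
Qed.

Lemma ceil_nat_ge (x : R) : x <= INR (ceil_nat x).
Proof.
rewrite /ceil_nat; have [h1 h2] := archimed (- x).
set z := (- (up (- x) - 1))%Z.
have xz : x <= IZR z by rewrite /z opp_IZR minus_IZR; lra.
case: (Z.le_gt_cases 0 z) => z0; first by rewrite INR_IZR_INZ Z2Nat.id.
apply: Rle_trans (pos_INR _); apply: Rle_trans xz _; apply: IZR_le; lia.
Qed.

End RealBound.

From mathcomp Require Import all_boot all_order all_algebra.
From mathcomp Require Import boolp Rstruct ring lra zify.
Import Order.TTheory GRing.Theory Num.Theory.

Lemma leq_card_cover_seq (I : eqType) (U : finType) (A : {set U}) (s : seq I)
    (B : I -> {set U}) :
  (forall u, u \in A -> exists2 i, i \in s & u \in B i) ->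
  #|A| <= \sum_(i <- s) #|B i|.
Proof.
move=> covered.
apply: leq_trans (subset_leq_card (_ : A \subset \bigcup_(i <- s) B i)) _.
  by apply/subsetP => u /covered[i si ui]; rewrite (big_rem i si) inE ui.
elim/big_rec2: _ => [|i n C _ leCn]; first by rewrite cards0.
by apply: leq_trans (leq_card_setU _ _).1 _; rewrite leq_add2l.
Qed.

Section ListColourings.
Context {T : finType} (e : rel T).
Hypothesis e_sym : symmetric e.

Fixpoint walks (n : nat) (x : T) : seq (seq T) :=
  if n is n'.+1 then
    flatten [seq [seq u :: w | w <- walks n' u] | u <- [seq u <- enum T | e x u]]
  else [:: [::]].

Lemma mem_walks {x : T} {w : seq T} : path e x w -> w \in walks (size w) x.
Proof.
elim: w x => [|u w IHw] x /=; first by rewrite inE.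
case/andP=> exu pw; apply/flatten_mapP; exists u; first by rewrite mem_filter exu mem_enum.
exact/map_f/IHw.
Qed.

Lemma size_walks (D : nat) : (forall v, deg e v <= D) ->
  forall n x, size (walks n x) <= D ^ n.
Proof.
move=> degD; elim=> [|n IHn] x //=.
rewrite size_flatten /shape -map_comp sumnE big_map.
apply: leq_trans (_ : \sum_(u <- [seq u <- enum T | e x u]) D ^ n <= _).
  by apply: leq_sum => u _; rewrite /= size_map IHn.
rewrite big_const_seq count_predT iter_addn_0 expnS mulnC leq_mul2r.
by apply/orP; right; apply: leq_trans (degD x); rewrite /deg enumT cardsE cardE /enum_mem.
Qed.

Definition half_rep (c : T -> nat) (j : nat) (p : seq T) : Prop :=
  [/\ size p = j.*2, uniq p, sorted e p & map c (take j p) = map c (drop j p)].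

Lemma is_repetitionP (c : T -> nat) (p : seq T) :
  is_repetition e c p <-> exists2 j, 0 < j & half_rep c j p.
Proof.
split=> [[j [j0 sz /andP[up sp] hm]] | [j j0 [sz up sp hm]]]; exists j => //.
by split; rewrite ?/is_graph_path ?up.
Qed.

Lemma half_rep_eq_in (c c' : T -> nat) (j : nat) (p : seq T) :
  {in p, c =1 c'} -> half_rep c j p -> half_rep c' j p.
Proof.
move=> cc' [sz up sp hm]; split=> //.
have eq_take : {in take j p, c =1 c'} by move=> x /mem_take; apply: cc'.
have eq_drop : {in drop j p, c =1 c'} by move=> x /mem_drop; apply: cc'.
by move/eq_in_map: eq_take => <-; move/eq_in_map: eq_drop => <-.
Qed.

Lemma half_rep_rev (c : T -> nat) (j : nat) (p : seq T) :
  half_rep c j p -> half_rep c j (rev p).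
Proof.
move=> [sz up sp hm]; split; rewrite ?size_rev ?rev_uniq //.
  by rewrite rev_sorted; apply: sub_sorted sp => x y; rewrite e_sym.
have hj : size p - j = j by rewrite sz -addnn addnK.
by rewrite take_rev drop_rev hj !map_rev hm.
Qed.

(* [q] is [p] or [rev p]. *)
Lemma half_rep_first_half {c : T -> nat} {j : nat} {p : seq T} {v : T} :
  v \in p -> half_rep c j p ->
  exists2 q, {subset q <= p} & half_rep c j q /\ v \in take j q.
Proof.
move=> vp rp; case vt: (v \in take j p); first by exists p.
exists (rev p) => [x|]; first by rewrite mem_rev.
split; first exact: half_rep_rev.
have [sz _ _ _] := rp; have hj : size p - j = j by rewrite sz -addnn addnK.
rewrite take_rev hj mem_rev.
by move: vp; rewrite -{1}(cat_take_drop j p) mem_cat vt.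
Qed.

Variables (L : T -> seq nat) (M : nat).
Hypothesis L_le : forall v x, x \in L v -> x <= M.

Definition colouring := {ffun T -> 'I_M.+1}.

Definition colour (f : colouring) (u : T) : nat := f u.

Definition nonrep_on (S : {set T}) (c : T -> nat) : Prop :=
  forall p, {subset p <= S} -> ~ is_repetition e c p.

(* Outside [S] the colour is normalised to [0], so that every list colouring
   of [S] is counted exactly once. *)
Definition coloured_on (S : {set T}) (f : colouring) : bool :=
  [forall u, if u \in S then colour f u \in L u else f u == ord0].

Definition good (S : {set T}) : {set colouring} :=
  [set f | coloured_on S f && `[< nonrep_on S (colour f) >]].

Definition good_ext (S : {set T}) (v : T) : {set colouring} :=
  [set f | coloured_on (v |: S) f && `[< nonrep_on S (colour f) >]].

Lemma coloured_on_in {S : {set T}} {f : colouring} {u : T} :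
  coloured_on S f -> u \in S -> colour f u \in L u.
Proof. by move=> /forallP/(_ u) + uS; rewrite uS. Qed.

Lemma coloured_on_notin {S : {set T}} {f : colouring} {u : T} :
  coloured_on S f -> u \notin S -> f u = ord0.
Proof. by move=> /forallP/(_ u) + /negbTE uS; rewrite uS => /eqP. Qed.

Lemma is_repetition_eq_in (c c' : T -> nat) (p : seq T) :
  {in p, c =1 c'} -> is_repetition e c p -> is_repetition e c' p.
Proof.
move=> cc' /is_repetitionP[j j0 rp]; apply/is_repetitionP.
by exists j => //; apply: half_rep_eq_in rp.
Qed.

Definition palette (v : T) : {set 'I_M.+1} := [set x | val x \in L v].

Lemma card_palette (v : T) : size (undup (L v)) <= #|palette v|.
Proof.
rewrite cardE -(size_map val); apply: uniq_leq_size (undup_uniq _) _ => x.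
rewrite mem_undup => xL; have xM : x < M.+1 by rewrite ltnS (L_le _ _ xL).
by apply/mapP; exists (inord x); rewrite ?mem_enum ?inE /= inordK.
Qed.

Definition recolour (v : T) (xg : 'I_M.+1 * colouring) : colouring :=
  [ffun u => if u == v then xg.1 else xg.2 u].

Lemma card_good_ext (S : {set T}) (v : T) : v \notin S ->
  size (undup (L v)) * #|good S| <= #|good_ext S v|.
Proof.
move=> vS; apply: leq_trans (_ : #|setX (palette v) (good S)| <= _).
  by rewrite cardsX leq_mul2r card_palette orbT.
rewrite -(card_in_imset (f := recolour v)); last first.
  move=> [x g] [x' g']; rewrite !inE /= => /andP[_ /andP[cg _]] /andP[_ /andP[cg' _]] eqr.
  have := congr1 (fun f : colouring => f v) eqr; rewrite !ffunE eqxx /= => ->.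
  congr pair; apply/ffunP => u; have := congr1 (fun f : colouring => f u) eqr.
  rewrite !ffunE; case: eqP => [->|//] _.
  by rewrite (coloured_on_notin cg vS) (coloured_on_notin cg' vS).
apply/subset_leq_card/subsetP => f /imsetP[[x g]].
rewrite !inE /= => /andP[xL /andP[cg /asboolP nr]] ->.
apply/andP; split.
  apply/forallP => u; rewrite /colour ffunE in_setU1.
  by case: eqP => [->|_] //=; move/forallP: cg; apply.
apply/asboolP => p pS rp; apply: (nr p pS); apply: is_repetition_eq_in rp => u /pS uS.
by rewrite /colour ffunE; case: eqP => // uv; rewrite -uv uS in vS.
Qed.

Definition rep_candidates (v : T) (j : nat) : seq (seq T) :=
  flatten [seq [seq rev a ++ v :: b | a <- walks i v, b <- walks (j.*2 - i.+1) v]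
          | i <- iota 0 j].

Lemma mem_rep_candidates (v : T) (j : nat) (p : seq T) :
  sorted e p -> size p = j.*2 -> v \in take j p -> p \in rep_candidates v j.
Proof.
move=> sp sz vt; set i := index v p.
have ij : i < j := index_ltn vt.
have ip : i < size p by rewrite sz -addnn ltn_addr.
have pi : nth v p i = v := nth_index v (mem_take vt).
have pdec : p = take i p ++ v :: drop i.+1 p by rewrite -{1}pi -drop_nth // cat_take_drop.
have path_left : path e v (rev (take i p)).
  have := take_sorted i.+1 sp; rewrite (take_nth v ip) pi => srt.
  have : sorted e (rev (rcons (take i p) v)).
    by rewrite rev_sorted; apply: sub_sorted srt => x y; rewrite e_sym.
  by rewrite rev_rcons.
have path_right : path e v (drop i.+1 p).
  by have := drop_sorted i sp; rewrite (drop_nth v ip) pi.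
apply/flatten_mapP; exists i; first by rewrite mem_iota.
apply/allpairsP; exists (rev (take i p), drop i.+1 p); split => /=.
- by have := mem_walks path_left; rewrite size_rev size_takel // ltnW.
- by have := mem_walks path_right; rewrite size_drop sz.
- by rewrite revK.
Qed.

Lemma size_rep_candidates (D : nat) (v : T) (j : nat) : (forall u, deg e u <= D) ->
  size (rep_candidates v j) <= j * D ^ (j.*2).-1.
Proof.
move=> degD; rewrite size_flatten /shape -map_comp sumnE big_map big_seq.
apply: leq_trans (_ : \sum_(i <- iota 0 j | i \in iota 0 j) D ^ (j.*2).-1 <= _).
  apply: leq_sum => i; rewrite mem_iota add0n => /andP[_ ij]; rewrite /= size_allpairs.
  apply: leq_trans (leq_mul (size_walks _ degD _ _) (size_walks _ degD _ _)) _.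
  by rewrite -expnD; have -> : i + (j.*2 - i.+1) = (j.*2).-1 by rewrite -addnn; lia.
by rewrite -big_seq big_const_seq count_predT size_iota iter_addn_0 mulnC.
Qed.

Definition rep_fits (S : {set T}) (v : T) (j : nat) (p : seq T) : bool :=
  [&& uniq p, all (mem (v |: S)) p, size p == j.*2 & v \in take j p].

Definition rep_rest (S : {set T}) (v : T) (j : nat) (p : seq T) : {set T} :=
  (v |: S) :\: [set x in take j p].

Definition restrict (S : {set T}) (f : colouring) : colouring :=
  [ffun u => if u \in S then f u else ord0].

Definition copy_half (j : nat) (p : seq T) (g : colouring) : colouring :=
  [ffun u => if u \in take j p then g (nth u p (index u p + j)) else g u].

Definition rep_image (S : {set T}) (v : T) (j : nat) (p : seq T) : {set colouring} :=
  if rep_fits S v j p then [set copy_half j p g | g in good (rep_rest S v j p)] else set0.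

Definition rep_index (v : T) : seq (nat * seq T) :=
  [seq (j, p) | j <- index_iota 1 #|T|.+1, p <- rep_candidates v j].

Lemma rep_rest_sub {S : {set T}} {v : T} {j : nat} {p : seq T} :
  v \in take j p -> rep_rest S v j p \subset S.
Proof.
move=> vt; apply/subsetP => x; rewrite in_setD in_setU1 inE.
by case/andP=> xt /orP[/eqP xv|//]; rewrite xv vt in xt.
Qed.

Lemma card_setD_rep_rest {S : {set T}} {v : T} {j : nat} {p : seq T} :
  v \notin S -> rep_fits S v j p -> #|S :\: rep_rest S v j p| = j.-1.
Proof.
move=> vS /and4P[up /allP pvS /eqP sz vt].
have -> : S :\: rep_rest S v j p = [set x in take j p] :\ v.
  apply/setP => x; rewrite !in_setD !in_setU1 !inE.
  case xS: (x \in S); rewrite /= ?orbT ?orbF ?andbT ?andbF ?negbK.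
    by have -> : x != v by apply: contraNneq vS => <-.
  case xt: (x \in take j p); rewrite ?andbF //=.
  by have := pvS x (mem_take xt); rewrite !inE xS orbF => ->.
have := cardsD1 v [set x in take j p].
rewrite inE vt cardsE (card_uniqP (take_uniq j up)) size_takel; last first.
  by rewrite sz -addnn leq_addr.
by move=> hj; rewrite [in RHS]hj add1n.
Qed.

Lemma restrict_good (S : {set T}) (v : T) (j : nat) (p : seq T) (f : colouring) :
  v \in take j p -> coloured_on (v |: S) f -> nonrep_on S (colour f) ->
  restrict (rep_rest S v j p) f \in good (rep_rest S v j p).
Proof.
move=> vt cf nr; rewrite inE; apply/andP; split.
  apply/forallP => u; rewrite /colour ffunE.
  case: ifP => uR; rewrite uR //; case/setDP: uR => uvS _; exact: coloured_on_in cf uvS.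
apply/asboolP => q qR rq; apply: (nr q) => [x /qR|].
  exact: (subsetP (rep_rest_sub vt)).
by apply: is_repetition_eq_in rq => x /qR xR; rewrite /colour ffunE xR.
Qed.

Lemma copy_half_restrict (S : {set T}) (v : T) (j : nat) (p : seq T) (f : colouring) :
  coloured_on (v |: S) f -> {subset p <= v |: S} -> half_rep (colour f) j p ->
  copy_half j p (restrict (rep_rest S v j p) f) = f.
Proof.
move=> cf pvS [sz up sp hm]; apply/ffunP => u; rewrite !ffunE.
case: ifP => ut; last first.
  by case: ifP => // /negbT; rewrite in_setD inE ut /= => /(coloured_on_notin cf) ->.
set w := nth u p (index u p + j).
have iu : index u p < j := index_ltn ut.
have sz_drop : size (drop j p) = j by rewrite size_drop sz -addnn addnK.
have sz_take : size (take j p) = j by rewrite size_takel // sz -addnn leq_addr.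
have wd : w = nth u (drop j p) (index u p) by rewrite nth_drop addnC.
have w_drop : w \in drop j p by rewrite wd mem_nth // sz_drop.
have wR : w \in rep_rest S v j p.
  rewrite in_setD inE (pvS w (mem_drop w_drop)) andbT.
  move: up; rewrite -{1}(cat_take_drop j p) cat_uniq => /and3P[_ /hasPn disj _].
  exact: disj.
rewrite wR; apply: val_inj.
have := congr1 (fun s => nth 0 s (index u p)) hm.
rewrite /= (nth_map u) ?sz_take // (nth_map u) ?sz_drop // nth_take // -wd.
by rewrite nth_index // (mem_take ut).
Qed.

Lemma bad_ext_covered (S : {set T}) (v : T) (f : colouring) : v \notin S ->
  f \in good_ext S v :\: good (v |: S) ->
  exists2 jp, jp \in rep_index v & f \in rep_image S v jp.1 jp.2.
Proof.
move=> vS; rewrite !inE => /andP[not_good /andP[cf /asboolP nr]].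
have [p [pvS rp]] : exists p, {subset p <= v |: S} /\ is_repetition e (colour f) p.
  apply: contrapT => none; move: not_good; rewrite cf /=; apply/negP/negPn/asboolP.
  by move=> p pvS rp; apply: none; exists p.
have vp : v \in p.
  apply/negP => vnp; apply: (nr p) rp => x xp.
  by move: (pvS x xp); rewrite in_setU1 => /orP[/eqP xv|//]; rewrite -xv xp in vnp.
have [j j0 hr] := (is_repetitionP _ _).1 rp.
have [q qp [hq vq]] := half_rep_first_half vp hr.
have qvS : {subset q <= v |: S} by move=> x /qp/pvS.
have [sz uq sq _] := hq.
exists (j, q).
  apply/allpairsPdep; exists j, q; split; rewrite ?mem_rep_candidates //.
  rewrite mem_index_iota j0 ltnS; apply: leq_trans (max_card (mem q)).
  by rewrite (card_uniqP uq) sz -addnn leq_addr.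
rewrite /rep_image /rep_fits uq sz eqxx vq (introT allP qvS) /=.
apply/imsetP; exists (restrict (rep_rest S v j q) f); first exact: restrict_good.
by rewrite copy_half_restrict.
Qed.

Lemma card_good_step (S : {set T}) (v : T) : v \notin S ->
  size (undup (L v)) * #|good S|
    <= #|good (v |: S)| + \sum_(jp <- rep_index v) #|rep_image S v jp.1 jp.2|.
Proof.
move=> vS; apply: leq_trans (card_good_ext _ _ vS) _.
rewrite -{1}(setID (good_ext S v) (good (v |: S))).
apply: leq_trans (leq_card_setU _ _).1 (leq_add (subset_leq_card (subsetIr _ _)) _).
by apply: leq_card_cover_seq => f; apply: bad_ext_covered.
Qed.

Lemma card_rep_image (S : {set T}) (v : T) (j : nat) (p : seq T) :
  #|rep_image S v j p| <= (if rep_fits S v j p then #|good (rep_rest S v j p)| else 0).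
Proof. by rewrite /rep_image; case: ifP => _; [exact: leq_imset_card | rewrite cards0]. Qed.

End ListColourings.

Section Growth.
Local Open Scope ring_scope.

Lemma sum_deriv_geometric_le {R : realFieldType} {x : R} (J : nat) :
  0 <= x -> x < 1 -> \sum_(1 <= j < J.+1) j%:R * x ^+ j.-1 <= ((1 - x) ^+ 2)^-1.
Proof.
move=> x0 x1.
have closed_form n : (1 - x) ^+ 2 * \sum_(1 <= j < n.+1) j%:R * x ^+ j.-1
    = 1 - n.+1%:R * x ^+ n + n%:R * x ^+ n.+1.
  elim: n => [|n IHn]; first by rewrite big_geq // mulr0 expr0 mulr1 mul0r addr0 subrr.
  by rewrite big_nat_recr //= mulrDr IHn !mulrS !exprS; ring.
have sq_gt0 : 0 < (1 - x) ^+ 2 by rewrite exprn_gt0 // subr_gt0.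
rewrite -[X in _ <= X]mulr1 ler_pdivlMl // closed_form mulrS exprS.
have xJ : 0 <= x ^+ J := exprn_ge0 J x0.
have J0 : 0 <= J%:R :> R := ler0n _ _.
have : 0 <= x ^+ J * (J%:R * (1 - x) + 1) by apply: mulr_ge0 => //; nra.
nra.
Qed.

Variables (T : finType) (e : rel T).
Hypothesis e_sym : symmetric e.
Variables (L : T -> seq nat) (M : nat).
Hypothesis L_le : forall v x, x \in L v -> (x <= M)%N.
Variables (R : realFieldType) (D k : nat) (b : R).
Hypothesis deg_le : forall v, (deg e v <= D)%N.
Hypothesis list_size : forall v, (k <= size (undup (L v)))%N.
Hypothesis D2_lt_b : D%:R ^+ 2 < b.
Hypothesis k_ge : b + D%:R / (1 - D%:R ^+ 2 / b) ^+ 2 <= k%:R.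

Let ngood (S : {set T}) : R := #|good e L M S|%:R.

Let b_gt0 : 0 < b.
Proof. by apply: le_lt_trans D2_lt_b; apply: exprn_ge0. Qed.

Definition grows_below (n : nat) : Prop :=
  forall S : {set T}, (#|S| < n)%N -> forall v, v \notin S -> b * ngood S <= ngood (v |: S).

Lemma grows_below_setD (n m : nat) (S S' : {set T}) : grows_below n ->
  S' \subset S -> (#|S| <= n)%N -> #|S :\: S'| = m -> b ^+ m * ngood S' <= ngood S.
Proof.
move=> grow; elim: m S => [|m IHm] S sub Sn Sm.
  have -> : S = S' by apply/eqP; rewrite eqEsubset sub andbT -setD_eq0 -cards_eq0 Sm.
  by rewrite expr0 mul1r.
have : (0 < #|S :\: S'|)%N by rewrite Sm.
rewrite card_gt0 => /set0Pn[w]; rewrite in_setD => /andP[wS' wS].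
have Sw_lt : (#|S :\ w| < #|S|)%N by rewrite (cardsD1 w S) wS.
have le_Sw : b ^+ m * ngood S' <= ngood (S :\ w).
  apply: IHm.
  - apply/subsetP => y yS'; rewrite in_setD1 (subsetP sub y yS') andbT.
    by apply: contraNneq wS' => <-.
  - exact: leq_trans (ltnW Sw_lt) Sn.
  - have := cardsD1 w (S :\: S'); rewrite in_setD wS' wS Sm setDDl setUC -setDDl.
    by case.
have grow_w : b * ngood (S :\ w) <= ngood S.
  by rewrite -{2}(setD1K wS); apply: grow; rewrite ?setD11 // (leq_trans Sw_lt Sn).
by rewrite exprS -mulrA; apply: le_trans grow_w; rewrite ler_pM2l.
Qed.

Let x := D%:R ^+ 2 / b.

Lemma candidate_weight (j : nat) : (0 < j)%N ->
  (j * D ^ (j.*2).-1)%:R / b ^+ j.-1 = D%:R * (j%:R * x ^+ j.-1) :> R.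
Proof.
case: j => [//|j] _; have -> : (j.+1).*2.-1 = (2 * j).+1 by rewrite mul2n doubleS.
rewrite /x natrM natrX exprS exprM.
by rewrite expr_div_n /= !mulrA [D%:R * _]mulrC.
Qed.

Lemma card_rep_image_le (n : nat) (S : {set T}) (v : T) (j : nat) (p : seq T) :
  grows_below n -> (#|S| <= n)%N -> v \notin S ->
  #|rep_image e L M S v j p|%:R <= ngood S / b ^+ j.-1.
Proof.
move=> grow Sn vS.
have img_le : #|rep_image e L M S v j p|%:R
    <= if rep_fits S v j p then ngood (rep_rest S v j p) else 0.
  by have := card_rep_image e L M S v j p; rewrite -(ler_nat R); case: ifP.
apply: le_trans img_le _; case: ifP => fits; last by rewrite divr_ge0 ?ler0n ?exprn_ge0 ?ltW.
have /and4P[_ _ _ vt] := fits.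
rewrite ler_pdivlMr ?exprn_gt0 // mulrC.
exact: grows_below_setD grow (rep_rest_sub vt) Sn (card_setD_rep_rest vS fits).
Qed.

Lemma sum_card_rep_image_le {n : nat} {S : {set T}} {v : T} :
  grows_below n -> (#|S| <= n)%N -> v \notin S ->
  \sum_(jp <- rep_index e v) (#|rep_image e L M S v jp.1 jp.2|%:R : R)
    <= ngood S * (k%:R - b).
Proof.
move=> grow Sn vS; rewrite /rep_index big_allpairs_dep /=.
apply: le_trans (_ : \sum_(j <- index_iota 1 #|T|.+1)
    ngood S * (D%:R * (j%:R * x ^+ j.-1)) <= _).
  rewrite big_seq [X in _ <= X]big_seq; apply: ler_sum => j.
  rewrite mem_index_iota => /andP[j_gt0 _].
  apply: le_trans (_ : \sum_(p <- rep_candidates e v j) ngood S / b ^+ j.-1 <= _).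
    by apply: ler_sum => p _; apply: card_rep_image_le grow Sn vS.
  rewrite big_const_seq count_predT iter_addr_0 -[_ *+ size _]mulr_natl -candidate_weight //.
  rewrite mulrCA ler_wpM2l ?ler0n // ler_pM2r ?invr_gt0 ?exprn_gt0 // ler_nat.
  exact: size_rep_candidates.
have x_ge0 : 0 <= x by rewrite divr_ge0 ?exprn_ge0 ?ler0n ?ltW.
have x_lt1 : x < 1 by rewrite ltr_pdivrMr // mul1r.
rewrite -mulr_sumr -mulr_sumr; apply: ler_wpM2l; first exact: ler0n.
have geom := sum_deriv_geometric_le #|T| x_ge0 x_lt1.
have : D%:R * \sum_(1 <= j < #|T|.+1) j%:R * x ^+ j.-1 <= D%:R / (1 - x) ^+ 2.
  exact: ler_wpM2l (ler0n _ _) _ _ geom.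
have := k_ge; rewrite -/x; lra.
Qed.

Lemma grows_below_succ (n : nat) : grows_below n -> grows_below n.+1.
Proof.
move=> grow S Sn v vS.
have step := card_good_step e e_sym L M L_le S v vS.
have : (k * #|good e L M S| <= #|good e L M (v |: S)|
          + \sum_(jp <- rep_index e v) #|rep_image e L M S v jp.1 jp.2|)%N.
  by apply: leq_trans step; rewrite leq_mul2r list_size orbT.
rewrite -(ler_nat R) natrD natrM natr_sum.
have := sum_card_rep_image_le grow Sn vS.
rewrite /ngood; lra.
Qed.

Lemma grows_below_all (n : nat) : grows_below n.
Proof. by elim: n => [S|n IHn]; [rewrite ltn0 | exact: grows_below_succ]. Qed.

Lemma good_set0 : [ffun=> ord0] \in good e L M set0.
Proof.
rewrite inE; apply/andP; split; first by apply/forallP => u; rewrite inE ffunE.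
apply/asboolP => p p0 /is_repetitionP[j j0 [sz _ _ _]].
case: p p0 sz => [_ sz|u p p0 _]; first by move: j0; rewrite -double_gt0 -sz.
by have := p0 u (mem_head u p); rewrite inE.
Qed.

Lemma exists_nonrep_list_colouring :
  exists c : T -> nat, (forall v, c v \in L v) /\ nonrepetitive e c.
Proof.
have grown : b ^+ #|T| * ngood set0 <= ngood setT.
  by apply: grows_below_setD (grows_below_all #|T|) (sub0set _) _ _;
    rewrite ?setD0 cardsT.
have ngood0 : 1 <= ngood set0.
  by rewrite /ngood ler1n card_gt0; apply/set0Pn; exists [ffun=> ord0]; exact: good_set0.
have : 0 < ngood setT.
  by apply: lt_le_trans grown; rewrite mulr_gt0 ?exprn_gt0 // (lt_le_trans ltr01).
rewrite /ngood ltr0n card_gt0 => /set0Pn[f]; rewrite inE => /andP[cf /asboolP nr].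
exists (colour M f); split; first by move=> v; apply: coloured_on_in cf _; rewrite inE.
by move=> p; apply: nr => u; rewrite inE.
Qed.

End Growth.

Lemma nonrep_choosable_of_growth (T : finType) (e : rel T) (R : realFieldType)
    (D k : nat) (b : R) :
  symmetric e -> (forall v, deg e v <= D) ->
  (D%:R ^+ 2 < b)%R -> (b + D%:R / (1 - D%:R ^+ 2 / b) ^+ 2 <= k%:R)%R ->
  nonrep_choosable e k.
Proof.
move=> e_sym deg_le D2_lt_b k_ge L list_size.
pose M := \max_(v : T) \max_(x <- L v) x.
have L_le v x : x \in L v -> (x <= M)%N.
  by move=> xL; apply: leq_trans (leq_bigmax v); rewrite (big_rem _ xL) /= leq_maxl.
exact: (@exists_nonrep_list_colouring T e e_sym L M L_le R D k b deg_le list_size D2_lt_b k_ge).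
Qed.

Theorem theorem5 (T : finType) (e : rel T)
  (e_sym : symmetric e) (e_irr : irreflexive e) :
  3 <= maxdeg e ->
  nonrep_choosable e (ceil_nat (rep_bound (INR (maxdeg e)))).
Proof.
move=> D3; set D := maxdeg e.
have D3R : Rle (IZR 3) (INR D) by rewrite INR_IZR_INZ; apply: IZR_le; lia.
have [b D2_lt_b b_le] := rep_bound_ge _ D3R.
apply: (@nonrep_choosable_of_growth T e R D _ b e_sym) => [v||].
- exact: leq_bigmax.
- by apply/RltP; rewrite -!INRE -!RpowE.
- apply/RleP; rewrite -!INRE -!RpowE.
  exact: Rle_trans b_le (ceil_nat_ge _).
Qed.
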